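(* Let $f(x)=\ln(e-x)$ for $0\le x\le e-1$ and $f(x)=0$ for $x>e-1$. For every instance, if $r^\star$ is the stopping rate of $\mathrm{EnvyFree}(f)$ computed from the true costs, then $\sum_{i\in S}u_if_{r^\star}(c_i/u_i)\ge(1-1/e)U^\star$.
   Context: Setting: a buyer with budget $B>0$ faces a finite set $S$ of sellers; seller $i$ owns one divisible item giving utility $u_i>0$ and has cost $c_i\ge0$; buying fraction $x_i\in[0,1]$ costs $x_ic_i$ and gives utility $x_iu_i$. $U^\star=\max\{\sum_iu_i\alpha_i:\alpha\in[0,1]^S,\sum_ic_i\alpha_i\le B\}$. For $r>0$: $f_r(x)=f(x/r)$, $Q_r(x)=xf_r(x)+\int_x^\infty f_r(y)\,dy$, $P_{i,r}(x)=u_iQ_r(x/u_i)$. The stopping rate $r^\star$ of $\mathrm{EnvyFree}(f)$ on cost vector $c$ is the value at which, decreasing $r$ from $\infty$, the nondecreasing continuous function $r\mapsto\sum_iP_{i,r}(c_i)$ first equals $B$; $\mathrm{EnvyFree}(f)$ buys $f_{r^\star}(c_i/u_i)$ of item $i$ and pays $P_{i,r^\star}(c_i)$. *)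

From Stdlib Require Import Reals.
From Coquelicot Require Import Coquelicot.
Open Scope R_scope.

Definition fEF (x : R) : R := if Rle_dec x (exp 1 - 1) then ln (exp 1 - x) else 0.

Definition f_r (f : R -> R) (r x : R) : R := f (x / r).

Definition Q_r (f : R -> R) (r x : R) : R :=
  x * f_r f r x + RInt_gen (f_r f r) (at_point x) (Rbar_locally p_infty).

Definition P_r (f : R -> R) (ui r x : R) : R := ui * Q_r f r (x / ui).

Fixpoint rsum (n : nat) (g : nat -> R) : R :=
  match n with O => 0 | S k => rsum k g + g k end.

Definition total_pay (f : R -> R) (n : nat) (u c : nat -> R) (r : R) : R :=
  rsum n (fun i => P_r f (u i) r (c i)).

(* r* is the stopping rate of EnvyFree(f): decreasing r from +oo, the first
   value at which the total payment equals B. *)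
Definition stopping_rate (f : R -> R) (n : nat) (u c : nat -> R) (B rs : R) : Prop :=
  0 < rs /\ total_pay f n u c rs = B /\
  (forall r, rs < r -> total_pay f n u c r <> B).

Definition feasible (n : nat) (c : nat -> R) (B : R) (alpha : nat -> R) : Prop :=
  (forall i, (i < n)%nat -> 0 <= alpha i <= 1) /\ rsum n (fun i => c i * alpha i) <= B.

(* For a seller with cost c, utility u and x = c/u
   below the cutoff r(e-1), put t = e - x/r; then f_r(x) = ln t and the payment
   is u Q_r(x) = u r (e ln t - t + 1), so for any fraction a in [0, 1]
     (1 - 1/e) u a <= u f_r(x) + (c a - P_r(c)) / (e r),
   the gap being u (1 - a)(t - 1)/e.  Beyond the cutoff f_r and Q_r vanish and
   the gap is u a (x - r(e-1))/(e r).  Summing over the sellers, the payments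
   add up to B while a feasible allocation spends at most B, so the last term
   sums to something nonpositive. *)

From Stdlib Require Import Reals Lra.
From Coquelicot Require Import Coquelicot.
Open Scope R_scope.

Lemma exp1_gt1 : 1 < exp 1.
Proof. rewrite <- exp_0 at 1. apply exp_increasing, Rlt_0_1. Qed.

Lemma rsum_le n g h :
  (forall i, (i < n)%nat -> g i <= h i) -> rsum n g <= rsum n h.
Proof.
  induction n as [|n IH]; simpl; intros Hle; [lra|].
  assert (rsum n g <= rsum n h) by (apply IH; auto).
  assert (g n <= h n) by auto.
  lra.
Qed.

Lemma rsum_plus n g h : rsum n (fun i => g i + h i) = rsum n g + rsum n h.
Proof. induction n as [|n IH]; simpl; [ring|rewrite IH; ring]. Qed.

Lemma rsum_minus n g h : rsum n (fun i => g i - h i) = rsum n g - rsum n h.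
Proof. induction n as [|n IH]; simpl; [ring|rewrite IH; ring]. Qed.

Lemma rsum_mult_l n k g : rsum n (fun i => k * g i) = k * rsum n g.
Proof. induction n as [|n IH]; simpl; [ring|rewrite IH; ring]. Qed.

Lemma rsum_div_r n k g : rsum n (fun i => g i / k) = rsum n g / k.
Proof. induction n as [|n IH]; simpl; [unfold Rdiv; ring|rewrite IH; unfold Rdiv; ring]. Qed.

Lemma is_RInt_gen_p_infty (f : R -> R) (x A l : R) :
  (forall b, A < b -> is_RInt f x b l) ->
  is_RInt_gen f (at_point x) (Rbar_locally p_infty) l.
Proof.
  intros Hint P HP.
  apply Filter_prod with (fun a => a = x) (fun b => A < b).
  - reflexivity.
  - exists A. auto.
  - intros a b -> Hb. exists l. split; [now apply Hint | now apply locally_singleton].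
Qed.

Lemma RInt_gen_p_infty (f : R -> R) (x A l : R) :
  (forall b, A < b -> is_RInt f x b l) ->
  RInt_gen f (at_point x) (Rbar_locally p_infty) = l.
Proof.
  intros Hint.
  apply (@is_RInt_gen_unique R_CompleteNormedModule);
    [apply Proper_StrongProper, at_point_filter
    |apply Proper_StrongProper, Rbar_locally_filter
    |now apply is_RInt_gen_p_infty with A].
Qed.

Section ScaledEF.

Variable r : R.
Hypothesis r_pos : 0 < r.

Lemma f_r_fEF_le y : y <= (exp 1 - 1) * r -> f_r fEF r y = ln (exp 1 - y / r).
Proof.
  intros Hy. unfold f_r, fEF.
  destruct (Rle_dec (y / r) (exp 1 - 1)) as [_|Hn]; [reflexivity|].
  exfalso. apply Hn, Rle_div_l; lra.
Qed.

Lemma f_r_fEF_gt y : (exp 1 - 1) * r < y -> f_r fEF r y = 0.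
Proof.
  intros Hy. unfold f_r, fEF.
  destruct (Rle_dec (y / r) (exp 1 - 1)) as [Hl|]; [|reflexivity].
  exfalso. apply Rle_div_l in Hl; lra.
Qed.

Lemma is_RInt_f_r_fEF_zero a b :
  (exp 1 - 1) * r <= a <= b -> is_RInt (f_r fEF r) a b 0.
Proof.
  intros Hab.
  replace 0 with (scal (b - a) 0) by (unfold scal; simpl; unfold mult; simpl; ring).
  apply is_RInt_ext with (fun _ => 0).
  - intros y Hy. rewrite Rmin_left, Rmax_right in Hy by lra.
    symmetry. apply f_r_fEF_gt. lra.
  - apply (@is_RInt_const R_NormedModule).
Qed.

(* A primitive of y |-> ln (e - y/r) below the cutoff, since (t ln t - t)' = ln t. *)
Definition fEF_primitive (y : R) : R :=
  let t := exp 1 - y / r in - r * (t * ln t - t).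

Lemma fEF_primitive_derive y :
  y <= (exp 1 - 1) * r -> is_derive fEF_primitive y (ln (exp 1 - y / r)).
Proof.
  intros Hy.
  assert (Ht : 1 <= exp 1 - y / r) by (assert (y / r <= exp 1 - 1) by (apply Rle_div_l; lra); lra).
  unfold fEF_primitive. auto_derive; [lra|].
  replace (exp 1 + - (y * / r)) with (exp 1 - y / r) by (unfold Rdiv; ring).
  field. lra.
Qed.

Lemma is_RInt_f_r_fEF_below x :
  x <= (exp 1 - 1) * r ->
  let t := exp 1 - x / r in
  is_RInt (f_r fEF r) x ((exp 1 - 1) * r) (r * (t * ln t - t + 1)).
Proof.
  intros Hx t.
  apply is_RInt_ext with (fun y => ln (exp 1 - y / r)).
  { intros y Hy. rewrite Rmin_left, Rmax_right in Hy by lra.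
    symmetry. apply f_r_fEF_le. lra. }
  replace (r * (t * ln t - t + 1))
    with (fEF_primitive ((exp 1 - 1) * r) - fEF_primitive x).
  2:{ unfold fEF_primitive, t.
      replace (exp 1 - (exp 1 - 1) * r / r) with 1 by (field; lra).
      rewrite ln_1. ring. }
  apply (@is_RInt_derive R_CompleteNormedModule fEF_primitive).
  - intros y Hy. rewrite Rmin_left, Rmax_right in Hy by lra.
    apply fEF_primitive_derive. lra.
  - intros y Hy. rewrite Rmin_left, Rmax_right in Hy by lra.
    assert (y / r <= exp 1 - 1) by (apply Rle_div_l; lra).
    apply (ex_derive_continuous (K := R_AbsRing) (V := R_NormedModule)).
    auto_derive. lra.
Qed.

Lemma Q_r_fEF_below x :
  x <= (exp 1 - 1) * r ->
  let t := exp 1 - x / r in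
  Q_r fEF r x = r * (exp 1 * ln t - t + 1).
Proof.
  intros Hx t.
  unfold Q_r.
  rewrite (RInt_gen_p_infty _ x ((exp 1 - 1) * r) (r * (t * ln t - t + 1))).
  - rewrite f_r_fEF_le by exact Hx. fold t.
    replace x with (r * (exp 1 - t)) at 1 by (unfold t; field; lra).
    ring.
  - intros b Hb.
    replace (r * (t * ln t - t + 1)) with (plus (r * (t * ln t - t + 1)) 0)
      by (unfold plus; simpl; ring).
    apply (@is_RInt_Chasles R_NormedModule) with ((exp 1 - 1) * r).
    + now apply is_RInt_f_r_fEF_below.
    + apply is_RInt_f_r_fEF_zero. lra.
Qed.

Lemma Q_r_fEF_above x : (exp 1 - 1) * r < x -> Q_r fEF r x = 0.
Proof.
  intros Hx.
  unfold Q_r.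
  rewrite (RInt_gen_p_infty _ x x 0).
  - rewrite f_r_fEF_gt by exact Hx. ring.
  - intros b Hb. apply is_RInt_f_r_fEF_zero. lra.
Qed.

Lemma fEF_unit_bound x a :
  0 <= a <= 1 ->
  (1 - 1 / exp 1) * a <= f_r fEF r x + (x * a - Q_r fEF r x) / (exp 1 * r).
Proof.
  intros Ha.
  pose proof exp1_gt1 as He.
  destruct (Rle_dec x ((exp 1 - 1) * r)) as [Hx|Hx].
  - rewrite (Q_r_fEF_below x Hx), (f_r_fEF_le x Hx).
    set (t := exp 1 - x / r).
    assert (Ht : 1 <= t) by (assert (x / r <= exp 1 - 1) by (apply Rle_div_l; lra); unfold t; lra).
    replace x with (r * (exp 1 - t)) by (unfold t; field; lra).
    assert (Hgap : ln t + (r * (exp 1 - t) * a - r * (exp 1 * ln t - t + 1)) / (exp 1 * r)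
                   - (1 - 1 / exp 1) * a = (1 - a) * (t - 1) / exp 1) by (field; lra).
    assert (0 <= (1 - a) * (t - 1) / exp 1)
      by (apply Rdiv_le_0_compat; [apply Rmult_le_pos|]; lra).
    lra.
  - apply Rnot_le_lt in Hx.
    rewrite (Q_r_fEF_above x Hx), (f_r_fEF_gt x Hx).
    assert (Hgap : 0 + (x * a - 0) / (exp 1 * r) - (1 - 1 / exp 1) * a
                   = a * (x - (exp 1 - 1) * r) / (exp 1 * r)) by (field; lra).
    assert (0 <= a * (x - (exp 1 - 1) * r) / (exp 1 * r))
      by (apply Rdiv_le_0_compat; [apply Rmult_le_pos|apply Rmult_lt_0_compat]; lra).
    lra.
Qed.

Lemma fEF_seller_bound u c a :
  0 < u -> 0 <= a <= 1 ->
  (1 - 1 / exp 1) * (u * a)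
    <= u * f_r fEF r (c / u) + (c * a - P_r fEF u r c) / (exp 1 * r).
Proof.
  intros Hu Ha.
  pose proof exp1_gt1 as He.
  pose proof (Rmult_le_compat_l u _ _ (Rlt_le _ _ Hu) (fEF_unit_bound (c / u) a Ha)) as Hb.
  unfold P_r.
  replace (u * (f_r fEF r (c / u) + (c / u * a - Q_r fEF r (c / u)) / (exp 1 * r)))
    with (u * f_r fEF r (c / u) + (c * a - u * Q_r fEF r (c / u)) / (exp 1 * r))
    in Hb by (field; lra).
  lra.
Qed.

End ScaledEF.

Theorem lemma4 (n : nat) (u c : nat -> R) (B rs : R) :
  0 < B ->
  (forall i, (i < n)%nat -> 0 < u i) ->
  (forall i, (i < n)%nat -> 0 <= c i) ->
  stopping_rate fEF n u c B rs ->
  forall alpha : nat -> R, feasible n c B alpha ->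
    rsum n (fun i => u i * f_r fEF rs (c i / u i))
      >= (1 - 1 / exp 1) * rsum n (fun i => u i * alpha i).
Proof.
  intros _ Hu _ [Hrs [Hpay _]] alpha [Halpha Hspend].
  pose proof exp1_gt1 as He.
  assert (Hsum : rsum n (fun i => (1 - 1 / exp 1) * (u i * alpha i))
    <= rsum n (fun i => u i * f_r fEF rs (c i / u i)
                        + (c i * alpha i - P_r fEF (u i) rs (c i)) / (exp 1 * rs)))
    by (apply rsum_le; intros i Hi; apply fEF_seller_bound; auto).
  rewrite rsum_mult_l, rsum_plus, rsum_div_r, rsum_minus in Hsum.
  change (rsum n (fun i => P_r fEF (u i) rs (c i))) with (total_pay fEF n u c rs) in Hsum.
  rewrite Hpay in Hsum.
  assert ((rsum n (fun i => c i * alpha i) - B) / (exp 1 * rs) <= 0)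
    by (apply Rmult_le_0_r; [lra | left; apply Rinv_0_lt_compat, Rmult_lt_0_compat; lra]).
  lra.
Qed.
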